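(* Let $C\in(\frac{\beta u_0-1}{r},\frac{\beta u_0}{r})$ with $C<\xi_1(\beta)$. Then there exists a unique $z_f^C\in(0,d)$ such that the function $f_C=F_{z_f^C}\mathbf 1_{[0,z_f^C]}+G_{C,z_f^C}\mathbf 1_{(z_f^C,d]}$ solves Problem 1 with $f_C'(0)=0$ and $f_C(d)=C$. Moreover, the map $C\mapsto z_f^C$ is increasing and $z_f^{\xi_1(\beta)}=d$, where for $C=\xi_1(\beta)$ the quantity $z_f^C$ denotes the point $s\in(0,d]$ with $F_s(s)=G_{C,s}(s)$.
   Context: Fix $\mu\in\mathbb R$, $\sigma>0$, $u_0>0$, $r>0$, $\beta>0$, $d>0$. For $u\in[0,u_0]$ let $\theta_1(u)=\frac{\sqrt{(\mu-u)^2+2r\sigma^2}+(\mu-u)}{\sigma^2}$, $\theta_2(u)=\frac{\sqrt{(\mu-u)^2+2r\sigma^2}-(\mu-u)}{\sigma^2}$; write $\alpha_i=\theta_i(u_0)$, $\gamma_i=\theta_i(0)$ ($i=1,2$). Let $\xi_1(\beta)=\frac{\beta u_0}{r}-\beta\frac{e^{\alpha_1d}+\frac{\alpha_1}{\alpha_2}e^{-\alpha_2d}}{\alpha_1(e^{\alpha_1d}-e^{-\alpha_2d})}$. For $s\in(0,d]$ and real $C$ define on $[0,d]$ $$F_s(z)=\frac{\beta u_0}{r}-\beta\frac{e^{\alpha_1z}+\frac{\alpha_1}{\alpha_2}e^{-\alpha_2z}}{\alpha_1(e^{\alpha_1s}-e^{-\alpha_2s})},$$ $$G_{C,s}(z)=\frac{C\gamma_2e^{-\gamma_2(s-d)}-\beta}{\gamma_1e^{\gamma_1s}+\gamma_2e^{(\gamma_1+\gamma_2)d}e^{-\gamma_2s}}\big(e^{\gamma_1z}-e^{(\gamma_1+\gamma_2)d}e^{-\gamma_2z}\big)+Ce^{-\gamma_2(z-d)}.$$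 Problem 1: a bounded twice continuously differentiable function $f$ on $[0,d]$ satisfying $-rf(z)-\mu f'(z)+\frac{\sigma^2}{2}f''(z)+\sup_{u\in[0,u_0]}\{(\beta+f'(z))u\}=0$ for $z\in[0,d]$ (one-sided derivatives at endpoints). *)

From Stdlib Require Import Reals.
Open Scope R_scope.

Definition theta1 (mu sigma r u : R) : R :=
  (sqrt ((mu - u) ^ 2 + 2 * r * sigma ^ 2) + (mu - u)) / sigma ^ 2.
Definition theta2 (mu sigma r u : R) : R :=
  (sqrt ((mu - u) ^ 2 + 2 * r * sigma ^ 2) - (mu - u)) / sigma ^ 2.

Definition xi1 (mu sigma u0 r beta d : R) : R :=
  let a1 := theta1 mu sigma r u0 in
  let a2 := theta2 mu sigma r u0 in
  beta * u0 / r
  - beta * (exp (a1 * d) + a1 / a2 * exp (- a2 * d))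
      / (a1 * (exp (a1 * d) - exp (- a2 * d))).

Definition Ffun (mu sigma u0 r beta s z : R) : R :=
  let a1 := theta1 mu sigma r u0 in
  let a2 := theta2 mu sigma r u0 in
  beta * u0 / r
  - beta * (exp (a1 * z) + a1 / a2 * exp (- a2 * z))
      / (a1 * (exp (a1 * s) - exp (- a2 * s))).

Definition Gfun (mu sigma r beta d C s z : R) : R :=
  let g1 := theta1 mu sigma r 0 in
  let g2 := theta2 mu sigma r 0 in
  (C * g2 * exp (- g2 * (s - d)) - beta)
    / (g1 * exp (g1 * s) + g2 * exp ((g1 + g2) * d) * exp (- g2 * s))
    * (exp (g1 * z) - exp ((g1 + g2) * d) * exp (- g2 * z))
  + C * exp (- g2 * (z - d)).

(* f_C = F_s 1_[0,s] + G_{C,s} 1_(s,d]  (values outside [0,d] are irrelevant) *)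
Definition fC (mu sigma u0 r beta d C s : R) (z : R) : R :=
  if Rle_dec z s then Ffun mu sigma u0 r beta s z
  else Gfun mu sigma r beta d C s z.

Definition has_deriv_on (a b : R) (f f' : R -> R) : Prop :=
  forall x, a <= x <= b ->
  forall eps, 0 < eps -> exists delta, 0 < delta /\
    forall y, a <= y <= b -> y <> x -> Rabs (y - x) < delta ->
      Rabs ((f y - f x) / (y - x) - f' x) < eps.

Definition cont_on (a b : R) (f : R -> R) : Prop :=
  forall x, a <= x <= b ->
  forall eps, 0 < eps -> exists delta, 0 < delta /\
    forall y, a <= y <= b -> Rabs (y - x) < delta -> Rabs (f y - f x) < eps.

Definition solves_problem1 (mu sigma u0 r beta d : R) (f f1 f2 : R -> R) : Prop :=
  (exists M, forall z, 0 <= z <= d -> Rabs (f z) <= M) /\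
  has_deriv_on 0 d f f1 /\ has_deriv_on 0 d f1 f2 /\ cont_on 0 d f2 /\
  forall z, 0 <= z <= d ->
    exists S, is_lub (fun y => exists u, 0 <= u <= u0 /\ y = (beta + f1 z) * u) S /\
      - r * f z - mu * f1 z + sigma ^ 2 / 2 * f2 z + S = 0.

Definition good_switch (mu sigma u0 r beta d C z : R) : Prop :=
  0 < z < d /\
  exists f1 f2 : R -> R,
    solves_problem1 mu sigma u0 r beta d (fC mu sigma u0 r beta d C z) f1 f2 /\
    f1 0 = 0 /\ fC mu sigma u0 r beta d C z d = C.

Definition admissible (mu sigma u0 r beta d C : R) : Prop :=
  (beta * u0 - 1) / r < C < beta * u0 / r /\ C < xi1 mu sigma u0 r beta d.

From Stdlib Require Import Reals Lra Psatz.
From Coquelicot Require Import Coquelicot.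
Open Scope R_scope.

(* For s > 0 let Psi(s) be the value at d of the solution of the uncontrolled equation
   sigma^2/2 y'' - mu y' - r y = 0 with y(s) = F_s(s) and y'(s) = -beta.  Since G_{C,s} solves
   this equation with G(d) = C and G'(s) = -beta = F_s'(s), the glued function f_C is continuous
   at s, and then automatically C^1, exactly when C = Psi(s).  It is then C^2 because both pieces
   solve their equations with the same data at s, and the supremum in Problem 1 is attained at
   u = u0 on [0,s] (where beta + F_s' >= 0) and at u = 0 on (s,d] (where beta + G' <= 0, a
   consequence of F_s''(s) < 0).  Finally Psi is strictly increasing on (0,d], Psi(d) = xi_1(beta)
   and Psi(s) -> -oo as s -> 0+, which gives existence, uniqueness and monotonicity of z_f^C. *)

Definition char_poly (mu sigma r u x : R) : R :=
  sigma ^ 2 / 2 * x ^ 2 - (mu - u) * x - r.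

Section CharacteristicRoots.
Variables mu sigma r u : R.
Hypotheses (sigma_gt0 : 0 < sigma) (r_gt0 : 0 < r).

Local Notation q := (sqrt ((mu - u) ^ 2 + 2 * r * sigma ^ 2)).

Lemma sqrt_disc_sqr : q * q = (mu - u) ^ 2 + 2 * r * sigma ^ 2.
Proof.
  apply sqrt_sqrt. pose proof (pow2_ge_0 (mu - u)).
  assert (0 < r * sigma ^ 2) by (apply Rmult_lt_0_compat; [lra | apply pow_lt; lra]). lra.
Qed.

Lemma sqrt_disc_gt : mu - u < q /\ - q < mu - u.
Proof.
  apply Rabs_def2. rewrite <- sqrt_Rsqr_abs. apply sqrt_lt_1_alt.
  assert (0 < sigma ^ 2) by (apply pow_lt; lra). split; [apply Rle_0_sqr | unfold Rsqr; nra].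
Qed.

Lemma theta1_gt0 : 0 < theta1 mu sigma r u.
Proof. apply Rdiv_lt_0_compat; [destruct sqrt_disc_gt; lra | apply pow_lt; lra]. Qed.

Lemma theta2_gt0 : 0 < theta2 mu sigma r u.
Proof. apply Rdiv_lt_0_compat; [destruct sqrt_disc_gt; lra | apply pow_lt; lra]. Qed.

Lemma theta_mul : theta1 mu sigma r u * theta2 mu sigma r u = 2 * r / sigma ^ 2.
Proof.
  unfold theta1, theta2.
  replace ((q + (mu - u)) / sigma ^ 2 * ((q - (mu - u)) / sigma ^ 2))
    with ((q * q - (mu - u) ^ 2) / sigma ^ 4) by (field; lra).
  rewrite sqrt_disc_sqr. field. lra.
Qed.

Lemma theta_sub : theta1 mu sigma r u - theta2 mu sigma r u = 2 * (mu - u) / sigma ^ 2.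
Proof. unfold theta1, theta2. field. lra. Qed.

Lemma char_poly_theta1 : char_poly mu sigma r u (theta1 mu sigma r u) = 0.
Proof.
  unfold char_poly, theta1.
  transitivity ((q * q - ((mu - u) ^ 2 + 2 * r * sigma ^ 2)) / (2 * sigma ^ 2)); [field; lra|].
  rewrite sqrt_disc_sqr. field. lra.
Qed.

Lemma char_poly_neg_theta2 : char_poly mu sigma r u (- theta2 mu sigma r u) = 0.
Proof.
  unfold char_poly, theta2.
  transitivity ((q * q - ((mu - u) ^ 2 + 2 * r * sigma ^ 2)) / (2 * sigma ^ 2)); [field; lra|].
  rewrite sqrt_disc_sqr. field. lra.
Qed.
End CharacteristicRoots.

Lemma exp_le_exp x y : x <= y -> exp x <= exp y.
Proof. intros [Hxy | ->]; [left; apply exp_increasing |]; lra. Qed.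

Lemma exp_gap_pos a b s : 0 < a + b -> 0 < s -> 0 < exp (a * s) - exp (- b * s).
Proof. intros Hab Hs. assert (exp (- b * s) < exp (a * s)) by (apply exp_increasing; nra). lra. Qed.

Lemma exp_combination_le g1 g2 P Q t : 0 < g1 -> 0 < g2 -> 0 <= t ->
  P + Q <= 0 -> g1 * P < g2 * Q -> P * exp (g1 * t) + Q * exp (- g2 * t) <= P + Q.
Proof.
  intros Hg1 Hg2 Ht HPQ Hslope.
  assert (Hg1t : 0 <= g1 * t) by (apply Rmult_le_pos; lra).
  assert (Hg2t : 0 <= g2 * t) by (apply Rmult_le_pos; lra).
  pose proof (exp_ineq1_le (g1 * t)) as HX. pose proof (exp_ineq1_le (- g2 * t)) as HY.
  assert (HY1 : exp (- g2 * t) <= 1) by (rewrite <- exp_0; apply exp_le_exp; lra).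
  remember (exp (g1 * t)) as X. remember (exp (- g2 * t)) as Y.
  assert (HP : P <= 0) by nra.
  assert (HPX : P * (X - 1) <= 0) by (apply Rmult_le_0_r; lra).
  destruct (Rle_dec 0 Q) as [HQ | HQ].
  - assert (Q * (Y - 1) <= 0) by (apply Rmult_le_0_l; lra). lra.
  - (* g1 (PX + QY - P - Q) <= Q (g2 (X - 1) - g1 (1 - Y)) <= 0 *)
    assert (g1 * P * (X - 1) <= g2 * Q * (X - 1)) by (apply Rmult_le_compat_r; lra).
    assert (g1 * (1 - Y) <= g2 * (X - 1)) by nra.
    assert (g1 * (P * X + Q * Y - (P + Q)) <= 0) by nra.
    nra.
Qed.

Lemma extension_cont_near_left (F G : R -> R) s x :
  x < s -> locally x (fun t => F t = extension_cont F G s t).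
Proof.
  intros Hx. apply (filter_imp (fun t => t < s)); [| now apply open_lt].
  intros t Ht. unfold extension_cont. destruct Rle_dec; [reflexivity | lra].
Qed.

Lemma extension_cont_near_right (F G : R -> R) s x :
  s < x -> locally x (fun t => G t = extension_cont F G s t).
Proof.
  intros Hx. apply (filter_imp (fun t => s < t)); [| now apply open_gt].
  intros t Ht. unfold extension_cont. destruct Rle_dec; [lra | reflexivity].
Qed.

Lemma is_derive_extension_cont (F G F' G' : R -> R) s :
  (forall x, is_derive F x (F' x)) -> (forall x, is_derive G x (G' x)) ->
  F s = G s -> F' s = G' s ->
  forall x, is_derive (extension_cont F G s) x (extension_cont F' G' s x).
Proof.
  intros HF HG Es Es' x. unfold extension_cont at 2.
  destruct (Rtotal_order x s) as [Hx | [-> | Hx]]; destruct Rle_dec; try lra.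
  - apply (is_derive_ext_loc F); [apply extension_cont_near_left |]; auto.
  - apply extension_cont_is_derive; [| rewrite Es' |]; auto.
  - apply (is_derive_ext_loc G); [apply extension_cont_near_right |]; auto.
Qed.

Lemma continuous_extension_cont (F G : R -> R) s :
  (forall x, continuous F x) -> (forall x, continuous G x) -> F s = G s ->
  forall x, continuous (extension_cont F G s) x.
Proof.
  intros HF HG Es x. destruct (Rtotal_order x s) as [Hx | [-> | Hx]].
  - apply (continuous_ext_loc _ F); [apply extension_cont_near_left |]; auto.
  - apply extension_cont_continuous; auto.
  - apply (continuous_ext_loc _ G); [apply extension_cont_near_right |]; auto.
Qed.

Lemma has_deriv_on_of_is_derive a b f f' :
  (forall x, is_derive f x (f' x)) -> has_deriv_on a b f f'.
Proof.
  intros Hf x _ eps Heps.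
  destruct (proj1 (is_derive_Reals _ _ _) (Hf x) eps Heps) as [delta Hdelta].
  exists delta. split; [apply cond_pos |]. intros y _ Hyx Hy.
  replace y with (x + (y - x)) at 1 by ring. apply Hdelta; [lra | exact Hy].
Qed.

Lemma cont_on_of_continuous a b f : (forall x, continuous f x) -> cont_on a b f.
Proof.
  intros Hf x _ eps Heps.
  destruct (proj2 (continuity_pt_filterlim f x) (Hf x) eps Heps) as [delta [Hdelta Hf']].
  exists delta. split; [exact Hdelta |]. intros y _ Hy.
  destruct (Req_dec y x) as [-> | Hyx].
  - rewrite Rminus_diag, Rabs_R0. exact Heps.
  - apply (Hf' y). split; [split; [exact I | auto] | exact Hy].
Qed.

Lemma continuous_bounded_on a b f :
  (forall x, continuous f x) -> exists M, forall x, a <= x <= b -> Rabs (f x) <= M.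
Proof.
  intros Hf. destruct (Rle_dec a b) as [Hab | Hab].
  - assert (Habs : forall x, a <= x <= b -> continuity_pt (fun t => Rabs (f t)) x).
    { intros x _. apply continuity_pt_filterlim, continuous_Rabs_comp, Hf. }
    destruct (continuity_ab_maj _ a b Hab Habs) as [x [Hx _]].
    exists (Rabs (f x)). exact Hx.
  - exists 0. intros x Hx. lra.
Qed.

Lemma cont_on_of_has_deriv_on a b f f' : has_deriv_on a b f f' -> cont_on a b f.
Proof.
  intros Hf x Hx eps Heps.
  destruct (Hf x Hx 1 Rlt_0_1) as [delta [Hdelta Hq]].
  remember (Rabs (f' x) + 1) as K eqn:EK.
  assert (HK : 0 < K) by (pose proof (Rabs_pos (f' x)); lra).
  exists (Rmin delta (eps / K)).
  split; [apply Rmin_pos; [lra | apply Rdiv_lt_0_compat; lra] |].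
  intros y Hy Hyx. pose proof (Rmin_l delta (eps / K)). pose proof (Rmin_r delta (eps / K)).
  destruct (Req_dec y x) as [-> | Hne]; [rewrite Rminus_diag, Rabs_R0; exact Heps |].
  assert (Hslope : Rabs ((f y - f x) / (y - x)) <= K).
  { pose proof (Hq y Hy Hne ltac:(lra)).
    pose proof (Rabs_triang_inv ((f y - f x) / (y - x)) (f' x)). lra. }
  replace (f y - f x) with ((f y - f x) / (y - x) * (y - x)) by (field; lra).
  rewrite Rabs_mult.
  apply (Rle_lt_trans _ (K * Rabs (y - x))); [apply Rmult_le_compat_r; [apply Rabs_pos | exact Hslope] |].
  replace eps with (K * (eps / K)) by (field; lra).
  apply Rmult_lt_compat_l; lra.
Qed.

Lemma cont_on_eq_of_eq_right a b x (f g : R -> R) :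
  cont_on a b f -> a <= x < b -> continuity_pt g x ->
  (forall y, x < y <= b -> f y = g y) -> f x = g x.
Proof.
  intros Hf Hx Hg Hfg. destruct (Req_dec (f x) (g x)) as [E | Hne]; [exact E | exfalso].
  assert (He : 0 < Rabs (f x - g x)) by (apply Rabs_pos_lt; lra).
  destruct (Hf x ltac:(lra) (Rabs (f x - g x) / 2) ltac:(lra)) as [d1 [Hd1 Hfy]].
  destruct (Hg (Rabs (f x - g x) / 2) ltac:(lra)) as [d2 [Hd2 Hgy]].
  assert (Hh : exists h, 0 < h /\ h < d1 /\ h < d2 /\ h <= b - x).
  { exists (Rmin (Rmin d1 d2) (b - x) / 2).
    pose proof (Rmin_l (Rmin d1 d2) (b - x)). pose proof (Rmin_r (Rmin d1 d2) (b - x)).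
    pose proof (Rmin_l d1 d2). pose proof (Rmin_r d1 d2).
    assert (0 < Rmin (Rmin d1 d2) (b - x)) by (repeat apply Rmin_pos; lra). lra. }
  destruct Hh as (h & Hh0 & Hh1 & Hh2 & Hhb).
  assert (Hdist : Rabs (x + h - x) = h) by (replace (x + h - x) with h by ring; apply Rabs_pos_eq; lra).
  assert (Hfh : Rabs (g (x + h) - f x) < Rabs (f x - g x) / 2).
  { rewrite <- (Hfg (x + h)) by lra. apply Hfy; lra. }
  assert (Hgh : Rabs (g (x + h) - g x) < Rabs (f x - g x) / 2).
  { apply Hgy. split; [split; [exact I | intro; lra] | simpl; unfold R_dist; lra]. }
  pose proof (Rabs_triang (f x - g (x + h)) (g (x + h) - g x)) as Htri.
  replace (f x - g (x + h) + (g (x + h) - g x)) with (f x - g x) in Htri by ring.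
  rewrite Rabs_minus_sym in Hfh. lra.
Qed.

Lemma is_lub_scaled_interval v u0 :
  0 <= u0 -> is_lub (fun y => exists u, 0 <= u <= u0 /\ y = v * u) (Rmax 0 (v * u0)).
Proof.
  intros Hu0. split.
  - intros y [u [Hu ->]]. destruct (Rle_dec 0 v).
    + eapply Rle_trans; [| apply Rmax_r]. apply Rmult_le_compat_l; lra.
    + eapply Rle_trans; [| apply Rmax_l]. nra.
  - intros B HB. apply Rmax_lub; apply HB.
    + exists 0. split; [lra | ring].
    + exists u0. split; [lra | reflexivity].
Qed.

Lemma solves_problem1_intro mu sigma u0 r beta d (f f1 f2 : R -> R) :
  0 <= u0 ->
  (forall x, is_derive f x (f1 x)) -> (forall x, is_derive f1 x (f2 x)) ->
  (forall x, continuous f2 x) ->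
  (forall z, 0 <= z <= d ->
     - r * f z - mu * f1 z + sigma ^ 2 / 2 * f2 z + Rmax 0 ((beta + f1 z) * u0) = 0) ->
  solves_problem1 mu sigma u0 r beta d f f1 f2.
Proof.
  intros Hu0 Hf Hf1 Hf2 Hhjb. split; [| split; [| split; [| split]]].
  - apply continuous_bounded_on. intros x. apply (@ex_derive_continuous R_AbsRing R_NormedModule).
    exists (f1 x). apply Hf.
  - apply has_deriv_on_of_is_derive, Hf.
  - apply has_deriv_on_of_is_derive, Hf1.
  - apply cont_on_of_continuous, Hf2.
  - intros z Hz. exists (Rmax 0 ((beta + f1 z) * u0)).
    split; [apply is_lub_scaled_interval, Hu0 | apply Hhjb, Hz].
Qed.

Section Switching.
Variables mu sigma u0 r beta d : R.
Hypotheses (sigma_gt0 : 0 < sigma) (r_gt0 : 0 < r) (beta_gt0 : 0 < beta).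

Local Notation a1 := (theta1 mu sigma r u0).
Local Notation a2 := (theta2 mu sigma r u0).
Local Notation g1 := (theta1 mu sigma r 0).
Local Notation g2 := (theta2 mu sigma r 0).
Local Notation F := (Ffun mu sigma u0 r beta).
Local Notation G := (Gfun mu sigma r beta d).

Let a1_gt0 : 0 < a1.
Proof. exact (theta1_gt0 mu sigma r u0 sigma_gt0 r_gt0). Qed.
Let a2_gt0 : 0 < a2.
Proof. exact (theta2_gt0 mu sigma r u0 sigma_gt0 r_gt0). Qed.
Let g1_gt0 : 0 < g1.
Proof. exact (theta1_gt0 mu sigma r 0 sigma_gt0 r_gt0). Qed.
Let g2_gt0 : 0 < g2.
Proof. exact (theta2_gt0 mu sigma r 0 sigma_gt0 r_gt0). Qed.

Let gap_pos s : 0 < s -> 0 < exp (a1 * s) - exp (- a2 * s).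
Proof. intros Hs. apply exp_gap_pos; lra. Qed.

Definition dF s z := - beta * (exp (a1 * z) - exp (- a2 * z)) / (exp (a1 * s) - exp (- a2 * s)).
Definition d2F s z :=
  - beta * (a1 * exp (a1 * z) + a2 * exp (- a2 * z)) / (exp (a1 * s) - exp (- a2 * s)).

Lemma is_derive_F s z : 0 < s -> is_derive (F s) z (dF s z).
Proof.
  intros Hs. pose proof (gap_pos s Hs). unfold Ffun, dF.
  auto_derive; [lra |]. field. lra.
Qed.

Lemma is_derive_dF s z : 0 < s -> is_derive (dF s) z (d2F s z).
Proof.
  intros Hs. pose proof (gap_pos s Hs). unfold dF, d2F.
  auto_derive; [lra |]. field. lra.
Qed.

Lemma continuous_d2F s z : continuous (d2F s) z.
Proof. apply (@ex_derive_continuous R_AbsRing R_NormedModule). unfold d2F. auto_derive. exact I. Qed.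

Lemma F_ode s z : 0 < s ->
  - r * F s z - mu * dF s z + sigma ^ 2 / 2 * d2F s z + (beta + dF s z) * u0 = 0.
Proof.
  intros Hs. pose proof (gap_pos s Hs).
  transitivity (- beta / (a1 * (exp (a1 * s) - exp (- a2 * s))) * exp (a1 * z) * char_poly mu sigma r u0 a1
    - beta / (a2 * (exp (a1 * s) - exp (- a2 * s))) * exp (- a2 * z) * char_poly mu sigma r u0 (- a2)).
  - unfold Ffun, dF, d2F, char_poly. field. lra.
  - rewrite char_poly_theta1, char_poly_neg_theta2 by assumption. ring.
Qed.

Lemma dF_0 s : dF s 0 = 0.
Proof. unfold dF. rewrite !Rmult_0_r, Rminus_diag. unfold Rdiv. ring. Qed.

Lemma dF_diag s : 0 < s -> dF s s = - beta.
Proof. intros Hs. pose proof (gap_pos s Hs). unfold dF. field. lra. Qed.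

Lemma dF_ge s z : 0 < s -> z <= s -> 0 <= beta + dF s z.
Proof.
  intros Hs Hzs. pose proof (gap_pos s Hs).
  assert (exp (a1 * z) <= exp (a1 * s)) by (apply exp_le_exp; nra).
  assert (exp (- a2 * s) <= exp (- a2 * z)) by (apply exp_le_exp; nra).
  replace (beta + dF s z) with (beta * ((exp (a1 * s) - exp (- a2 * s)) - (exp (a1 * z) - exp (- a2 * z)))
    / (exp (a1 * s) - exp (- a2 * s))) by (unfold dF; field; lra).
  apply Rdiv_le_0_compat; [apply Rmult_le_pos |]; lra.
Qed.

Lemma d2F_diag_lt0 s : 0 < s -> d2F s s < 0.
Proof.
  intros Hs. pose proof (gap_pos s Hs).
  assert (0 < a1 * exp (a1 * s) + a2 * exp (- a2 * s)).
  { pose proof (exp_pos (a1 * s)). pose proof (exp_pos (- a2 * s)). nra. }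
  assert (0 < beta * (a1 * exp (a1 * s) + a2 * exp (- a2 * s)) / (exp (a1 * s) - exp (- a2 * s))).
  { apply Rdiv_lt_0_compat; [apply Rmult_lt_0_compat |]; lra. }
  unfold d2F. unfold Rdiv in *. lra.
Qed.

Definition Gden s := g1 * exp (g1 * s) + g2 * exp ((g1 + g2) * d) * exp (- g2 * s).

Let Gden_pos s : 0 < Gden s.
Proof.
  apply Rplus_lt_0_compat; [apply Rmult_lt_0_compat | apply Rmult_lt_0_compat; [apply Rmult_lt_0_compat |]];
    auto using exp_pos.
Qed.

Definition Gcoef C s := (C * g2 * exp (- g2 * (s - d)) - beta) / Gden s.
Definition dG C s z :=
  Gcoef C s * (g1 * exp (g1 * z) + g2 * exp ((g1 + g2) * d) * exp (- g2 * z))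
  - C * g2 * exp (- g2 * (z - d)).
Definition d2G C s z :=
  Gcoef C s * (g1 ^ 2 * exp (g1 * z) - g2 ^ 2 * exp ((g1 + g2) * d) * exp (- g2 * z))
  + C * g2 ^ 2 * exp (- g2 * (z - d)).

Lemma is_derive_G C s z : is_derive (G C s) z (dG C s z).
Proof. unfold Gfun, dG, Gcoef, Gden. auto_derive; [exact I |]. unfold Rminus. ring. Qed.

Lemma is_derive_dG C s z : is_derive (dG C s) z (d2G C s z).
Proof. unfold dG, d2G. auto_derive; [exact I |]. unfold Rminus. ring. Qed.

Lemma continuous_G C s z : continuous (G C s) z.
Proof. apply (@ex_derive_continuous R_AbsRing R_NormedModule). eexists. apply is_derive_G. Qed.

Lemma continuous_d2G C s z : continuous (d2G C s) z.
Proof. apply (@ex_derive_continuous R_AbsRing R_NormedModule). unfold d2G. auto_derive. exact I. Qed.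

Lemma G_ode C s z : - r * G C s z - mu * dG C s z + sigma ^ 2 / 2 * d2G C s z = 0.
Proof.
  transitivity (Gcoef C s * exp (g1 * z) * char_poly mu sigma r 0 g1
    + (C * exp (- g2 * (z - d)) - Gcoef C s * exp ((g1 + g2) * d) * exp (- g2 * z))
      * char_poly mu sigma r 0 (- g2)).
  - unfold Gfun, dG, d2G, Gcoef, Gden, char_poly. ring.
  - rewrite char_poly_theta1, char_poly_neg_theta2 by assumption. ring.
Qed.

Lemma dG_diag C s : dG C s s = - beta.
Proof. pose proof (Gden_pos s). unfold dG, Gcoef, Gden in *. field. lra. Qed.

Lemma G_at_d C s : G C s d = C.
Proof.
  unfold Gfun. rewrite <- exp_plus, Rminus_diag, Rmult_0_r, exp_0.
  replace ((g1 + g2) * d + - g2 * d) with (g1 * d) by ring. ring.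
Qed.

Lemma dG_le C s z : s <= z -> d2G C s s < 0 -> beta + dG C s z <= 0.
Proof.
  intros Hsz Hd2.
  set (P := Gcoef C s * g1 * exp (g1 * s)).
  set (Q := (Gcoef C s * g2 * exp ((g1 + g2) * d) - C * g2 * exp (g2 * d)) * exp (- g2 * s)).
  assert (Hshift : forall t, dG C s (s + t) = P * exp (g1 * t) + Q * exp (- g2 * t)).
  { intros t. unfold dG, P, Q.
    replace (g1 * (s + t)) with (g1 * s + g1 * t) by ring.
    replace (- g2 * (s + t)) with (- g2 * s + - g2 * t) by ring.
    replace (- g2 * (s + t - d)) with (g2 * d + (- g2 * s + - g2 * t)) by ring.
    rewrite !exp_plus. ring. }
  assert (HPQ : P + Q = - beta).
  { pose proof (Hshift 0) as H0. rewrite Rplus_0_r, dG_diag, !Rmult_0_r, exp_0 in H0. lra. }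
  assert (Hslope : g1 * P - g2 * Q = d2G C s s).
  { unfold d2G, P, Q. replace (- g2 * (s - d)) with (g2 * d + - g2 * s) by ring.
    rewrite exp_plus. ring. }
  replace z with (s + (z - s)) by ring. rewrite Hshift.
  pose proof (exp_combination_le g1 g2 P Q (z - s) g1_gt0 g2_gt0). lra.
Qed.

(* The solutions of sigma^2/2 y'' - mu y' - r y = 0 with (y, y')(0) = (1, 0) and (0, 1);
   [switch_level s] is the Psi(s) of the header. *)
Definition sol_c t := (g1 * exp (- g2 * t) + g2 * exp (g1 * t)) / (g1 + g2).
Definition sol_s t := (exp (g1 * t) - exp (- g2 * t)) / (g1 + g2).

Lemma sol_c_ge t : 0 <= t -> g2 / (g1 + g2) <= sol_c t.
Proof.
  intros Ht. unfold sol_c, Rdiv. apply Rmult_le_compat_r; [left; apply Rinv_0_lt_compat; lra |].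
  pose proof (exp_pos (- g2 * t)).
  assert (1 <= exp (g1 * t)) by (rewrite <- exp_0; apply exp_le_exp, Rmult_le_pos; lra).
  nra.
Qed.

Lemma sol_s_ge0 t : 0 <= t -> 0 <= sol_s t.
Proof.
  intros Ht. unfold sol_s. apply Rdiv_le_0_compat; [| lra].
  assert (exp (- g2 * t) <= exp (g1 * t)) by (apply exp_le_exp; nra). lra.
Qed.

Definition switch_level s := F s s * sol_c (d - s) - beta * sol_s (d - s).

Lemma G_diag_sub_F_diag C s :
  G C s s - F s s =
  (C - switch_level s) * (exp (- g2 * (s - d)) * (g1 + g2) * exp (g1 * s) / Gden s).
Proof.
  pose proof (Gden_pos s) as Hden. unfold Gfun, switch_level, sol_c, sol_s, Gden in *.
  replace (- g2 * (s - d)) with (- g2 * s + g2 * d) by ring.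
  replace ((g1 + g2) * d) with (g1 * d + g2 * d) in * by ring.
  replace (- g2 * (d - s)) with (- (g2 * d + - g2 * s)) by ring.
  replace (g1 * (d - s)) with (g1 * d + - (g1 * s)) by ring.
  rewrite !exp_plus in *. rewrite !exp_Ropp, !exp_plus.
  pose proof (exp_pos (g1 * s)). pose proof (exp_pos (- g2 * s)).
  pose proof (exp_pos (g1 * d)). pose proof (exp_pos (g2 * d)).
  field. lra.
Qed.

Lemma F_diag_eq_G_diag_iff C s : F s s = G C s s <-> C = switch_level s.
Proof.
  pose proof (G_diag_sub_F_diag C s) as Hdiff. pose proof (Gden_pos s).
  assert (0 < exp (- g2 * (s - d)) * (g1 + g2) * exp (g1 * s) / Gden s).
  { apply Rdiv_lt_0_compat; [apply Rmult_lt_0_compat; [apply Rmult_lt_0_compat |] |];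
      auto using exp_pos; lra. }
  split; intros E.
  - rewrite E, Rminus_diag in Hdiff. symmetry in Hdiff.
    apply Rmult_integral in Hdiff as [Hdiff | Hdiff]; lra.
  - subst C. rewrite Rminus_diag, Rmult_0_l in Hdiff. lra.
Qed.

Lemma switch_level_d : switch_level d = xi1 mu sigma u0 r beta d.
Proof.
  unfold switch_level, sol_c, sol_s. rewrite Rminus_diag, !Rmult_0_r, exp_0.
  change (xi1 mu sigma u0 r beta d) with (F d d). field. lra.
Qed.

Lemma F_diag_lt s : 0 < s -> F s s < beta * u0 / r.
Proof.
  intros Hs. pose proof (gap_pos s Hs).
  assert (0 < exp (a1 * s) + a1 / a2 * exp (- a2 * s)).
  { pose proof (exp_pos (a1 * s)). pose proof (exp_pos (- a2 * s)).
    assert (0 < a1 / a2) by (apply Rdiv_lt_0_compat; lra). nra. }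
  assert (0 < beta * (exp (a1 * s) + a1 / a2 * exp (- a2 * s))
              / (a1 * (exp (a1 * s) - exp (- a2 * s)))).
  { apply Rdiv_lt_0_compat; apply Rmult_lt_0_compat; lra. }
  unfold Ffun. lra.
Qed.

Lemma d2F_diag_by_F_diag s : 0 < s -> beta * (g1 - g2) - g1 * g2 * F s s = - d2F s s.
Proof.
  intros Hs. pose proof (gap_pos s Hs).
  rewrite theta_mul, theta_sub by assumption.
  transitivity (beta * (2 * (mu - u0) / sigma ^ 2)
    + 2 * r / sigma ^ 2 * beta * (exp (a1 * s) + a1 / a2 * exp (- a2 * s))
      / (a1 * (exp (a1 * s) - exp (- a2 * s)))).
  { unfold Ffun. field. lra. }
  rewrite <- (theta_mul mu sigma r u0), <- (theta_sub mu sigma r u0) by assumption.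
  unfold d2F. field. lra.
Qed.

Definition dswitch_level s :=
  - d2F s s * ((u0 / r - F s s / beta) * sol_c (d - s) + sol_s (d - s)).

Lemma is_derive_switch_level s : 0 < s -> is_derive switch_level s (dswitch_level s).
Proof.
  intros Hs. pose proof (gap_pos s Hs). pose proof (d2F_diag_by_F_diag s Hs) as Hd2F.
  unfold switch_level, dswitch_level, sol_c, sol_s, Ffun.
  auto_derive.
  { apply Rmult_integral_contrapositive_currified; lra. }
  (* Up to the identity [d2F_diag_by_F_diag], the computed derivative is [dswitch_level s]. *)
  match goal with |- ?L = ?R =>
    transitivity (R + sol_s (d - s) * (beta * (g1 - g2) - g1 * g2 * F s s + d2F s s)) end.
  - unfold sol_s, Ffun, d2F, Rminus. field. repeat split; lra.
  - rewrite Hd2F. ring.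
Qed.

Lemma dswitch_level_pos s : 0 < s <= d -> 0 < dswitch_level s.
Proof.
  intros Hs. unfold dswitch_level.
  pose proof (d2F_diag_lt0 s ltac:(lra)). pose proof (F_diag_lt s ltac:(lra)).
  pose proof (sol_c_ge (d - s) ltac:(lra)). pose proof (sol_s_ge0 (d - s) ltac:(lra)).
  assert (0 < g2 / (g1 + g2)) by (apply Rdiv_lt_0_compat; lra).
  assert (0 < u0 / r - F s s / beta).
  { apply Rlt_0_minus. apply (Rmult_lt_reg_l beta); [lra |].
    replace (beta * (F s s / beta)) with (F s s) by (field; lra).
    replace (beta * (u0 / r)) with (beta * u0 / r) by (field; lra). lra. }
  apply Rmult_lt_0_compat; [lra |].
  apply Rplus_lt_le_0_compat; [apply Rmult_lt_0_compat |]; lra.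
Qed.

Lemma switch_level_increasing x y : 0 < x -> x < y -> y <= d -> switch_level x < switch_level y.
Proof.
  intros Hx Hxy Hy.
  destruct (MVT_cor2 switch_level dswitch_level x y Hxy) as [c [Hc Hcxy]].
  { intros c Hc. apply is_derive_Reals, is_derive_switch_level. lra. }
  pose proof (dswitch_level_pos c ltac:(lra)).
  assert (0 < dswitch_level c * (y - x)) by (apply Rmult_lt_0_compat; lra). lra.
Qed.

Lemma switch_level_inj x y : 0 < x <= d -> 0 < y <= d -> switch_level x = switch_level y -> x = y.
Proof.
  intros Hx Hy E. destruct (Rtotal_order x y) as [Hxy | [Hxy | Hxy]]; [| exact Hxy |].
  - pose proof (switch_level_increasing x y). lra.
  - pose proof (switch_level_increasing y x). lra.
Qed.

Lemma switch_level_lt_reflect x y :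
  0 < x <= d -> 0 < y <= d -> switch_level x < switch_level y -> x < y.
Proof.
  intros Hx Hy Hlt. destruct (Rlt_le_dec x y) as [Hxy | [Hxy | Hxy]]; [exact Hxy | |].
  - pose proof (switch_level_increasing y x). lra.
  - subst. lra.
Qed.

Lemma F_diag_le s : 0 < s -> F s s <= beta * u0 / r - beta / (a1 * (a1 + a2) * s).
Proof.
  intros Hs. pose proof (gap_pos s Hs) as Hgap.
  pose proof (exp_pos (a1 * s)). pose proof (exp_pos (- a2 * s)).
  (* e^(a1 s) - e^(-a2 s) = e^(a1 s) (1 - e^(-(a1 + a2) s)) <= e^(a1 s) (a1 + a2) s *)
  assert (Hgap_le : exp (a1 * s) - exp (- a2 * s) <= exp (a1 * s) * ((a1 + a2) * s)).
  { replace (exp (- a2 * s)) with (exp (a1 * s) * exp (- ((a1 + a2) * s)))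
      by (rewrite <- exp_plus; f_equal; ring).
    pose proof (exp_ineq1_le (- ((a1 + a2) * s))). nra. }
  assert (Hnum : exp (a1 * s) <= exp (a1 * s) + a1 / a2 * exp (- a2 * s)).
  { assert (0 < a1 / a2) by (apply Rdiv_lt_0_compat; lra). nra. }
  assert (Hratio : / (a1 * (a1 + a2) * s)
                   <= (exp (a1 * s) + a1 / a2 * exp (- a2 * s)) / (a1 * (exp (a1 * s) - exp (- a2 * s)))).
  { replace (/ (a1 * (a1 + a2) * s)) with (exp (a1 * s) / (a1 * (exp (a1 * s) * ((a1 + a2) * s))))
      by (field; repeat split; lra).
    unfold Rdiv. apply Rmult_le_compat; try lra.
    - left. apply Rinv_0_lt_compat. apply Rmult_lt_0_compat; nra.
    - apply Rinv_le_contravar; [apply Rmult_lt_0_compat |]; nra. }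
  apply (Rmult_le_compat_l beta) in Hratio; [| lra].
  unfold Ffun. unfold Rdiv in *. lra.
Qed.

Lemma switch_level_le_F_diag s :
  0 < s <= d -> F s s <= 0 -> switch_level s <= g2 / (g1 + g2) * F s s.
Proof.
  intros Hs HF. unfold switch_level.
  pose proof (sol_c_ge (d - s) ltac:(lra)). pose proof (sol_s_ge0 (d - s) ltac:(lra)).
  assert (F s s * sol_c (d - s) <= F s s * (g2 / (g1 + g2))) by (apply Rmult_le_compat_neg_l; lra).
  assert (0 <= beta * sol_s (d - s)) by (apply Rmult_le_pos; lra).
  lra.
Qed.

Lemma switch_level_unbounded_below K : 0 < d -> exists s, 0 < s < d /\ switch_level s < K.
Proof.
  intros Hd.
  remember (g2 / (g1 + g2)) as k eqn:Ek.
  assert (Hk : 0 < k) by (subst k; apply Rdiv_lt_0_compat; lra).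
  remember (a1 * (a1 + a2)) as c eqn:Ec.
  assert (Hc : 0 < c) by (subst c; apply Rmult_lt_0_compat; lra).
  remember (1 + Rabs (beta * u0 / r) + Rabs (K / k)) as T eqn:ET.
  pose proof (Rabs_pos (beta * u0 / r)). pose proof (Rabs_pos (K / k)).
  pose proof (Rle_abs (beta * u0 / r)). pose proof (Rabs_maj2 (K / k)).
  assert (HcT : 0 < c * T) by (apply Rmult_lt_0_compat; lra).
  remember (Rmin (d / 2) (beta / (c * T))) as s eqn:Es.
  assert (Hs : 0 < s) by (subst s; apply Rmin_pos; [lra | apply Rdiv_lt_0_compat; lra]).
  assert (Hsd : s <= d / 2) by (subst s; apply Rmin_l).
  assert (HTs : T <= beta / (c * s)).
  { assert (s * (c * T) <= beta).
    { apply (Rle_trans _ (beta / (c * T) * (c * T))).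
      - apply Rmult_le_compat_r; [lra | subst s; apply Rmin_r].
      - right. field. lra. }
    apply (Rmult_le_reg_r (c * s)); [apply Rmult_lt_0_compat; lra |].
    replace (beta / (c * s) * (c * s)) with beta by (field; lra). nra. }
  pose proof (F_diag_le s Hs) as HF. rewrite <- Ec in HF.
  exists s. split; [lra |].
  apply (Rle_lt_trans _ (k * F s s)); [subst k; apply switch_level_le_F_diag; lra |].
  apply (Rle_lt_trans _ (k * (K / k - 1))).
  - apply Rmult_le_compat_l; lra.
  - replace (k * (K / k - 1)) with (K - k) by (field; lra). lra.
Qed.

Lemma switch_level_surj C : 0 < d -> C < switch_level d -> exists z, 0 < z < d /\ switch_level z = C.
Proof.
  intros Hd HC.
  destruct (switch_level_unbounded_below C Hd) as [s0 [Hs0 HCs0]].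
  assert (Hcont : forall s, s0 <= s <= d -> continuity_pt (fun t => switch_level t - C) s).
  { intros s Hs. apply continuity_pt_minus; [| apply continuity_pt_const; intros ? ?; reflexivity].
    apply continuity_pt_filterlim, (@ex_derive_continuous R_AbsRing R_NormedModule).
    exists (dswitch_level s). apply is_derive_switch_level. lra. }
  destruct (Ranalysis5.IVT_interv _ s0 d Hcont ltac:(lra) ltac:(lra) ltac:(lra)) as [z [Hz Ez]].
  exists z. assert (z <> d) by (intros ->; lra). split; lra.
Qed.

Lemma d2F_diag_eq_d2G_diag C s : 0 < s -> F s s = G C s s -> d2F s s = d2G C s s.
Proof.
  intros Hs E.
  pose proof (F_ode s s Hs) as HF. pose proof (G_ode C s s) as HG.
  rewrite dF_diag, Rplus_opp_r, Rmult_0_l, Rplus_0_r in HF by exact Hs.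
  rewrite dG_diag in HG. rewrite E in HF.
  assert (0 < sigma ^ 2 / 2) by (apply Rdiv_lt_0_compat; [apply pow_lt |]; lra).
  apply (Rmult_eq_reg_l (sigma ^ 2 / 2)); lra.
Qed.

Lemma fC_solves C s : 0 <= u0 -> 0 < s -> F s s = G C s s ->
  solves_problem1 mu sigma u0 r beta d (fC mu sigma u0 r beta d C s)
    (extension_cont (dF s) (dG C s) s) (extension_cont (d2F s) (d2G C s) s).
Proof.
  intros Hu0 Hs E.
  assert (E1 : dF s s = dG C s s) by (rewrite dF_diag, dG_diag; auto).
  pose proof (d2F_diag_eq_d2G_diag C s Hs E) as E2.
  (* [fC mu sigma u0 r beta d C s] is definitionally [extension_cont (F s) (G C s) s]. *)
  apply solves_problem1_intro; [exact Hu0 | | | |].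
  - apply is_derive_extension_cont; auto using is_derive_F, is_derive_G.
  - apply is_derive_extension_cont; auto using is_derive_dF, is_derive_dG.
  - apply continuous_extension_cont; auto using continuous_d2F, continuous_d2G.
  - intros z _. unfold fC, extension_cont. destruct (Rle_dec z s) as [Hzs | Hzs].
    + rewrite Rmax_right by (apply Rmult_le_pos; [apply dF_ge |]; auto).
      apply F_ode, Hs.
    + rewrite Rmax_left, Rplus_0_r; [apply G_ode |].
      apply Rmult_le_0_r; [apply dG_le |]; [lra | rewrite <- E2; apply d2F_diag_lt0 |]; auto.
Qed.

Lemma good_switch_iff C z : 0 <= u0 ->
  good_switch mu sigma u0 r beta d C z <-> 0 < z < d /\ C = switch_level z.
Proof.
  intros Hu0. split.
  - intros [Hz [f1 [f2 [[_ [Hder _]] _]]]]. split; [exact Hz |].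
    apply F_diag_eq_G_diag_iff.
    transitivity (fC mu sigma u0 r beta d C z z); [unfold fC; destruct Rle_dec; lra |].
    apply (cont_on_eq_of_eq_right 0 d z _ _ (cont_on_of_has_deriv_on _ _ _ _ Hder)); [lra | |].
    + apply continuity_pt_filterlim, continuous_G.
    + intros y Hy. unfold fC. destruct Rle_dec; [lra | reflexivity].
  - intros [Hz E]. apply F_diag_eq_G_diag_iff in E.
    split; [exact Hz |]. do 2 eexists. split; [apply fC_solves; auto; lra |].
    unfold extension_cont, fC. split.
    + destruct Rle_dec; [apply dF_0 | lra].
    + destruct Rle_dec; [lra | apply G_at_d].
Qed.

End Switching.

Theorem proposition4p5 (mu sigma u0 r beta d : R) :
  0 < sigma -> 0 < u0 -> 0 < r -> 0 < beta -> 0 < d ->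
  (forall C, admissible mu sigma u0 r beta d C ->
     exists! z, good_switch mu sigma u0 r beta d C z) /\
  (forall C1 C2 z1 z2,
     admissible mu sigma u0 r beta d C1 -> admissible mu sigma u0 r beta d C2 ->
     C1 < C2 ->
     good_switch mu sigma u0 r beta d C1 z1 -> good_switch mu sigma u0 r beta d C2 z2 ->
     z1 < z2) /\
  (Ffun mu sigma u0 r beta d d = Gfun mu sigma r beta d (xi1 mu sigma u0 r beta d) d d /\
   forall s, 0 < s <= d ->
     Ffun mu sigma u0 r beta s s = Gfun mu sigma r beta d (xi1 mu sigma u0 r beta d) s s ->
     s = d).
Proof.
  intros Hsigma Hu0 Hr Hbeta Hd.
  pose proof (good_switch_iff mu sigma u0 r beta d Hsigma Hr Hbeta) as Hgood.
  pose proof (switch_level_inj mu sigma u0 r beta d Hsigma Hr Hbeta) as Hinj.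
  pose proof (F_diag_eq_G_diag_iff mu sigma u0 r beta d Hsigma Hr) as Hmatch.
  unfold admissible. rewrite <- (switch_level_d mu sigma u0 r beta d Hsigma Hr).
  split; [| split; [| split]].
  - intros C [_ HC].
    destruct (switch_level_surj mu sigma u0 r beta d Hsigma Hr Hbeta C Hd HC) as [z [Hz Ez]].
    exists z. split; [apply Hgood; auto; lra |].
    intros z' Hz'. apply Hgood in Hz' as [Hz' Ez']; [| lra]. apply Hinj; lra.
  - intros C1 C2 z1 z2 _ _ HC H1 H2.
    apply Hgood in H1 as [Hz1 ->]; apply Hgood in H2 as [Hz2 ->]; try lra.
    apply (switch_level_lt_reflect mu sigma u0 r beta d Hsigma Hr Hbeta); lra.
  - apply Hmatch. reflexivity.
  - intros s Hs E. apply Hmatch in E. apply Hinj; lra.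
Qed.
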